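(* Let $n>2$, let $G_n=BS(1,n)=\langle a,b\mid bab^{-1}=a^n\rangle$, and let $\Gamma_n$ be its Cayley graph with respect to $\{a,b\}$. Let $x,y\in G_n$. If there exist $k,k'\in\mathbb{N}$ such that, with $\tilde{x}=xb^k$ and $\tilde{y}=yb^{k'}$, one has $\tilde{y}=\tilde{x}a$, then there is a geodesic in $\Gamma_n$ between $x$ and $y$ containing $\tilde{x}$ and $\tilde{y}$.
   Context: $\Gamma_n$ has vertex set $G_n$ and edges $\{g,gs\}$ for $s\in\{a^{\pm1},b^{\pm1}\}$, each of length 1, with the path-length metric. *)

(* Concrete model of BS(1,n) = Z[1/n] ⋊ Z. *)
From mathcomp Require Import all_boot all_order all_algebra.
Set Implicit Arguments. Unset Strict Implicit. Unset Printing Implicit Defensive.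
Import Order.TTheory GRing.Theory Num.Theory.
Local Open Scope ring_scope.

(* An element (r, m) stands for a^r b^m, i.e. r ∈ Z[1/n] (inside rat), m ∈ Z.  With a = (1,0), b = (0,1):
   b a b^-1 = (n,0) = a^n.  The group G_n is the subgroup of rat * int
   generated by a and b (predicate inBS below). *)
Definition elt := (rat * int)%type.

Definition bsmul (n : nat) (x y : elt) : elt :=
  (x.1 + (n%:R : rat) ^ x.2 * y.1, x.2 + y.2).

Definition bs_one : elt := (0, 0).

Inductive gen := Ga | GaI | Gb | GbI.

Definition gen_val (s : gen) : elt :=
  match s with
  | Ga => (1, 0) | GaI => (-1, 0) | Gb => (0, 1) | GbI => (0, -1)
  end.

Definition bs_a : elt := gen_val Ga.
Definition bs_b : elt := gen_val Gb.

Definition walk (n : nat) (x : elt) (w : seq gen) : elt :=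
  foldl (fun g s => bsmul n g (gen_val s)) x w.

Definition inBS (n : nat) (x : elt) : Prop := exists w, x = walk n bs_one w.

Definition mul_bpow (n : nat) (x : elt) (k : nat) : elt :=
  iter k (fun g => bsmul n g bs_b) x.

Definition path_from_to (n : nat) (x y : elt) (w : seq gen) : Prop :=
  walk n x w = y.

Definition geodesic (n : nat) (x y : elt) (w : seq gen) : Prop :=
  path_from_to n x y w /\
  forall w', path_from_to n x y w' -> (size w <= size w')%N.

Definition on_path (n : nat) (x : elt) (w : seq gen) (z : elt) : Prop :=
  exists i, (i <= size w)%N /\ walk n x (take i w) = z.

From mathcomp Require Import all_boot all_order all_algebra.
From mathcomp Require Import zify.
Set Implicit Arguments. Unset Strict Implicit. Unset Printing Implicit Defensive.
Import Order.TTheory GRing.Theory Num.Theory.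
Local Open Scope ring_scope.

(* The word b^k a b^-k' has length k + k' + 1.  For any word from x = (r, m)
   to y, let M be the highest level m' reached by its vertices (r', m').  An
   a-letter at level m' moves the first coordinate by n^m', so the c letters
   a^{±1} displace it by at most c n^M; as the displacement is n^(m+k), we get
   c >= 1, and c >= n^(m+k-M) >= 2(m+k-M) + 1 when M < m + k.  Climbing from
   m to M and back down to y.2 = m + k - k' costs at least 2M - 2m - k + k'
   letters b^{±1}.  Both cases add up to at least k + k' + 1 letters. *)

Definition horizontal (s : gen) : bool :=
  match s with Ga | GaI => true | Gb | GbI => false end.

Fixpoint peak (n : nat) (x : elt) (w : seq gen) : int :=
  if w is s :: w' then Num.max x.2 (peak n (bsmul n x (gen_val s)) w') else x.2.

Lemma walk_cons n x s w :
  walk n x (s :: w) = walk n (bsmul n x (gen_val s)) w.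
Proof. by []. Qed.

Lemma walk_cat n x w1 w2 : walk n x (w1 ++ w2) = walk n (walk n x w1) w2.
Proof. exact: foldl_cat. Qed.

Lemma peak_ge n x w : x.2 <= peak n x w /\ (walk n x w).2 <= peak n x w.
Proof.
elim: w x => [|s w IH] x /=; first by [].
by case: (IH (bsmul n x (gen_val s))) => _ le_end; rewrite !le_max lexx le_end orbT.
Qed.

Lemma count_vertical_ge n x w :
  2 * peak n x w - x.2 - (walk n x w).2 <= (count (predC horizontal) w)%:Z.
Proof.
elim: w x => [|s w IH] x /=; first lia.
have := IH (bsmul n x (gen_val s)); have := peak_ge n (bsmul n x (gen_val s)) w.
by case: s; rewrite /bsmul /=; lia.
Qed.

Lemma bsmul_gen_shift n x s :
  `|(bsmul n x (gen_val s)).1 - x.1| = (horizontal s)%:R * (n%:R : rat) ^ x.2.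
Proof.
rewrite /bsmul /= addrAC subrr add0r normrM ger0_norm ?exprz_ge0 ?ler0n //.
by rewrite mulrC; case: s; rewrite /= ?normrN ?normr1 ?normr0.
Qed.

Lemma walk_shift_le n x w : (0 < n)%N ->
  `|(walk n x w).1 - x.1| <=
    (count horizontal w)%:R * (n%:R : rat) ^ peak n x w.
Proof.
move=> n_gt0; have n_ge1 : 1 <= (n%:R : rat) by rewrite ler1n.
elim: w x => [|s w IH] x /=; first by rewrite subrr normr0 mul0r.
have step := bsmul_gen_shift n x s; set x' := bsmul n x (gen_val s) in step *.
rewrite -(subrKA x'.1) natrD mulrDl addrC.
apply: (le_trans (ler_normD _ _)); apply: lerD.
- by rewrite step ler_wpM2l ?ler0n // ler_weXz2l // le_max lexx.
- apply: (le_trans (IH x')); rewrite ler_wpM2l ?ler0n // ler_weXz2l //.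
  by rewrite le_max lexx orbT.
Qed.

Lemma double_ltn_expn n j : (2 < n)%N -> (2 * j < n ^ j)%N.
Proof. by move=> n_gt2; elim: j => [|j IH]; rewrite ?expn0 // expnS; nia. Qed.

Lemma count_horizontal_gt n (c : nat) (h M : int) : (2 < n)%N ->
  (n%:R : rat) ^ h <= c%:R * (n%:R : rat) ^ M -> 2 * Num.max 0 (h - M) < c%:Z.
Proof.
move=> n_gt2 le_pow; have n_gt0 : 0 < (n%:R : rat) by rewrite ltr0n; lia.
have [le_hM | lt_Mh] := lerP h M.
  have c_gt0 : (0 < c)%N.
    rewrite lt0n; apply: contraTneq le_pow => ->.
    by rewrite mul0r -ltNge exprz_gt0.
  lia.
pose j := `|h - M|%N; have h_def : h = M + j%:Z by rewrite /j; lia.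
have le_nj_c : (n ^ j <= c)%N.
  rewrite -(ler_nat rat) natrX exprnP.
  move: le_pow; rewrite h_def expfzDr ?gt_eqF // mulrC.
  by rewrite ler_pM2r ?exprz_gt0.
have := double_ltn_expn j n_gt2; lia.
Qed.

Lemma size_walk_gt n x w (h : int) : (2 < n)%N ->
  (walk n x w).1 = x.1 + (n%:R : rat) ^ h ->
  2 * h - x.2 - (walk n x w).2 < (size w)%:Z.
Proof.
move=> n_gt2 shift_w.
have := walk_shift_le x w (ltnW (ltnW n_gt2)).
rewrite shift_w addrAC subrr add0r ger0_norm ?exprz_ge0 ?ler0n //.
move/(count_horizontal_gt n_gt2).
have := count_vertical_ge n x w; rewrite -(count_predC horizontal w).
lia.
Qed.

Lemma mul_bpowE n x k : mul_bpow n x k = (x.1, x.2 + k%:Z).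
Proof.
elim: k => [|k IH] /=; first by rewrite addr0; case: x.
rewrite /mul_bpow /= -/(mul_bpow n x k) IH /bsmul /= mulr0 addr0.
congr pair; lia.
Qed.

Lemma walk_nseq_Gb n x k : walk n x (nseq k Gb) = mul_bpow n x k.
Proof.
elim: k x => [|k IH] x //; rewrite walk_cons IH !mul_bpowE /bsmul /= mulr0 addr0.
congr pair; lia.
Qed.

Lemma walk_nseq_GbI n x k : walk n x (nseq k GbI) = (x.1, x.2 - k%:Z).
Proof.
elim: k x => [|k IH] x; first by rewrite subr0; case: x.
rewrite walk_cons IH /bsmul /= mulr0 addr0; congr pair; lia.
Qed.

Theorem lemma2 (n : nat) (x y : elt) (k k' : nat) :
  (2 < n)%N -> inBS n x -> inBS n y ->
  mul_bpow n y k' = bsmul n (mul_bpow n x k) bs_a ->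
  exists w : seq gen,
    geodesic n x y w /\
    on_path n x w (mul_bpow n x k) /\ on_path n x w (mul_bpow n y k').
Proof.
(* The length bound holds on all of rat * int. *)
move=> n_gt2 _ _ yb_xba.
have [y1E y2E] : y.1 = x.1 + (n%:R : rat) ^ (x.2 + k%:Z) /\ y.2 + k'%:Z = x.2 + k%:Z.
  by move: yb_xba; rewrite !mul_bpowE /bsmul /= mulr1 addr0 => -[-> ->].
have walk_xba : walk n x (rcons (nseq k Gb) Ga) = mul_bpow n y k'.
  by rewrite -cats1 walk_cat walk_nseq_Gb yb_xba.
have walk_xy : walk n x (rcons (nseq k Gb) Ga ++ nseq k' GbI) = y.
  by rewrite walk_cat walk_xba walk_nseq_GbI mul_bpowE addrK; case: (y).
exists (rcons (nseq k Gb) Ga ++ nseq k' GbI); split; [split|split] => //.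
- move=> w' walk_w'.
  have := size_walk_gt (x := x) (w := w') (h := x.2 + k%:Z) n_gt2.
  rewrite walk_w' y1E => /(_ erefl).
  by rewrite size_cat size_rcons !size_nseq; lia.
- exists k; rewrite -cats1 -catA take_size_cat ?size_nseq //.
  by rewrite size_cat size_nseq leq_addr walk_nseq_Gb.
- exists k.+1; rewrite take_size_cat ?size_rcons ?size_nseq //.
  by rewrite size_cat size_rcons size_nseq leq_addr walk_xba.
Qed.
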